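(* Let $k\ge 1$ and let $Q_k$ be the hypercube of dimension $k$. For any two vertices $u$ and $v$ of $Q_k$, perfect state transfer from $u$ to $v$ is possible by a single CQC-hopping; that is, there exist a spanning subgraph $H$ of $Q_k$ (with $V(H)=V(Q_k)$ and $E(H)\subseteq E(Q_k)$) and a time $t_0>0$ such that $|\langle v|\exp(-it_0A(H))|u\rangle|=1$.
   Context: The hypercube $Q_k$ is the graph with vertex set $\{0,1\}^k$, two vertices being adjacent if and only if their labels have Hamming distance $1$. For a graph $H$ with adjacency matrix $A(H)$, associate to each vertex $x$ the standard basis vector $|x\rangle\in\mathbb{C}^{|V(H)|}$; $H$ has perfect state transfer from $a$ to $b$ at time $t_0$ if $|\langle b|\exp(-it_0A(H))|a\rangle|=1$. A CQC-hopping from $u$ to $v$ on a graph $G$ consists of switching off a set of edges of $G$ to obtain a spanning subgraph $H$ (same vertex set, subset of the edges), performing perfect state transfer from $u$ to $v$ in $H$, and then switching the removed edges back on. *)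

From HB Require Import structures.
From mathcomp Require Import all_boot all_order all_algebra.
From mathcomp Require Import all_classical all_reals all_analysis.
From mathcomp.real_closed Require Import complex.
Set Implicit Arguments. Unset Strict Implicit. Unset Printing Implicit Defensive.
Import Order.TTheory GRing.Theory Num.Theory.
Import numFieldNormedType.Exports.
(* Topology/norm on the complex numbers R[i] (the canonical one coming from its
   numeric field norm, as provided generically by MathComp-Analysis for R^o). *)
HB.instance Definition _ (R : rcfType) := NormedModule.copy R[i] (R[i])^o.

Local Open Scope classical_set_scope.
Local Open Scope ring_scope.

Definition qvertex (k : nat) := {ffun 'I_k -> bool}.

Definition hamming (k : nat) (x y : qvertex k) : nat := #|[set i | x i != y i]|.

Definition hypercube_adj (k : nat) : rel (qvertex k) :=
  fun x y => hamming x y == 1%N.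

(* H (given by a symmetric adjacency relation on V(Q_k)) is a spanning subgraph
   of Q_k: same vertex set, edge set contained in that of Q_k. *)
Definition spanning_subgraph (k : nat) (H : rel (qvertex k)) : Prop :=
  symmetric H /\ subrel H (@hypercube_adj k).

(* Adjacency matrix A(H) over C, rows/columns indexed by V(H) via enum_rank. *)
Definition adj_matrix (R : rcfType) (T : finType) (H : rel T) : 'M[R[i]]_#|T| :=
  \matrix_(a, b) (H (enum_val a) (enum_val b))%:R.

Definition is_mexp (R : realType) (n : nat) (M E : 'M[R[i]]_n) : Prop :=
  (fun N => \sum_(m < N) (m`!%:R)^-1 *: M ^+ m) @ \oo --> (E : 'M[R[i]]_n).

(* Basis-vector amplitude <b| E |a> = E_{b,a}. *)
Definition amp (R : rcfType) (T : finType) (E : 'M[R[i]]_#|T|) (a b : T) : R[i] :=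
  E (enum_rank b) (enum_rank a).

From HB Require Import structures.
From mathcomp Require Import all_boot all_order all_algebra.
From mathcomp Require Import all_classical all_reals all_analysis.
From mathcomp.real_closed Require Import complex.
From mathcomp Require Import ring.
Import Order.TTheory GRing.Theory Num.Theory.
Import numFieldNormedType.Exports.
Local Open Scope ring_scope.

(* Let D be the set of coordinates in which u and v differ and let H keep
   only the edges of Q_k in the directions of D.  The Walsh characters
   chi_S(x) = (-1)^<S,x> form an orthogonal eigenbasis of A(H), with
   eigenvalue lambda_S = sum_(j in D) (-1)^(S_j), so the entries of
   exp(-itA(H)) are 2^-k sum_S chi_S(a) chi_S(b) e^(-it lambda_S).  At
   t = pi/2 the phase e^(-i pi lambda_S / 2) is a product over the coordinates
   in D, hence so is the amplitude <v|exp(-i pi/2 A(H))|u>: it equals 2^-k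
   times a product of k two-term sums, each equal to 2 (where u_j = v_j) or to
   -2i (where u_j <> v_j). *)

Section ImaginaryExponential.
Variable R : realType.
Local Open Scope classical_set_scope.
Local Notation C := R[i].

Definition expi (t : R) : C := (cos t)%:C%C + 'i%C * (sin t)%:C%C.

Lemma expi0 : expi 0 = 1.
Proof. by rewrite /expi cos0 sin0 mulr0 addr0. Qed.

Lemma expiD (s t : R) : expi (s + t) = expi s * expi t.
Proof.
rewrite /expi cosD sinD !(rmorphB, rmorphD, rmorphM).
apply/eqP; rewrite -subr_eq0; apply/eqP.
transitivity (- ('i%C ^+ 2 + 1) * ((sin s)%:C%C * (sin t)%:C%C) : C).
  by ring.
by rewrite sqr_i addNr oppr0 mul0r.
Qed.

Lemma expi_sum (I : Type) (r : seq I) (P : pred I) (f : I -> R) :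
  expi (\sum_(i <- r | P i) f i) = \prod_(i <- r | P i) expi (f i).
Proof. exact: (big_morph expi expiD expi0). Qed.

Lemma expi_pihalf : expi (pi / 2) = 'i%C.
Proof. by rewrite /expi cos_pihalf sin_pihalf mulr1 add0r. Qed.

Lemma expiN_pihalf : expi (- (pi / 2)) = - 'i%C.
Proof.
by rewrite /expi cosN sinN cos_pihalf sin_pihalf rmorphN mulrN mulr1 add0r.
Qed.

Lemma expi_pihalf_sign (b : bool) :
  expi (- (pi / 2 * (-1) ^+ b)) = - 'i%C * (-1) ^+ b :> C.
Proof.
by case: b; rewrite /= ?expr1 ?expr0 ?mulr1 ?mulrN1 ?opprK
  ?expi_pihalf ?expiN_pihalf.
Qed.

Lemma norm_i : `|'i%C| = 1 :> C.
Proof. by rewrite {1}/Num.norm /= expr0n expr1n add0r sqrtr1. Qed.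

Lemma exp_coeff_imaginary (t : R) (m : nat) :
  (m`!%:R)^-1 * ('i%C * t%:C%C) ^+ m =
  (cos_coeff t m)%:C%C + 'i%C * (sin_coeff t m)%:C%C :> C.
Proof.
have expr_i_double p : 'i%C ^+ p.*2 = (-1) ^+ p :> C.
  by rewrite -mul2n exprM sqr_i.
rewrite /cos_coeff /sin_coeff /= exprMn -[m]odd_double_half.
case: (odd m); move: m./2 => p /=; rewrite ?add1n ?add0n /= odd_double doubleK.
- rewrite exprS expr_i_double.
  rewrite !(rmorphM, rmorphXn, rmorphN, rmorph1, fmorphV, rmorph_nat).
  by rewrite /= !mul0r add0r mul1r; ring.
- rewrite expr_i_double.
  rewrite !(rmorphM, rmorphXn, rmorphN, rmorph1, fmorphV, rmorph_nat).
  by rewrite /= !mul0r mulr0 addr0 mul1r; ring.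
Qed.

Lemma norm_real_complex (x : R) : `|x%:C%C| = (`|x|)%:C%C :> C.
Proof. by rewrite {1}/Num.norm /= expr0n addr0 sqrtr_sqr. Qed.

Lemma cvg_real_complex (T : Type) (F : set_system T) (FF : Filter F)
    (f : T -> R) (l : R) :
  f x @[x --> F] --> l -> (f x)%:C%C @[x --> F] --> (l%:C%C : C).
Proof.
move=> fl; apply/cvgrPdist_lt => e.
rewrite ltcE /= => /andP[/eqP Im_e Re_e_gt0].
move/cvgrPdist_lt: fl => /(_ _ Re_e_gt0); apply: filterS => x.
by rewrite -rmorphB norm_real_complex ltcE /= Im_e eqxx.
Qed.

Lemma cvg_exp_series_imaginary (t : R) :
  \sum_(m < N) (m`!%:R)^-1 * ('i%C * t%:C%C) ^+ m @[N --> \oo] --> expi t.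
Proof.
have series_split N : \sum_(m < N) (m`!%:R)^-1 * ('i%C * t%:C%C) ^+ m =
    (series (cos_coeff t) N)%:C%C + 'i%C * (series (sin_coeff t) N)%:C%C.
  rewrite /series /= !big_mkord !rmorph_sum mulr_sumr -big_split /=.
  by apply: eq_bigr => m _; rewrite exp_coeff_imaginary.
under eq_fun do rewrite series_split.
apply: cvgD; last apply: cvgMl_tmp; apply: cvg_real_complex.
- by rewrite cos.unlock; exact: is_cvg_series_cos_coeff.
- by rewrite sin.unlock; exact: is_cvg_series_sin_coeff.
Qed.

End ImaginaryExponential.

Arguments expi {R}.

Section MatrixLimits.
Local Open Scope classical_set_scope.

Lemma cvg_mx_entries (T : puniformType) (U : Type) (F : set_system U)
    (FF : Filter F) m n (f : U -> 'M[T]_(m, n)) (L : 'M[T]_(m, n)) :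
  (forall a b, f x a b @[x --> F] --> L a b) -> f x @[x --> F] --> L.
Proof.
move=> fL; apply/cvg_mx_entourageP => E entE.
apply: filter_forall => a; apply: filter_forall => b.
move/cvg_app_entourageP: (fL a b) => /(_ E entE).
by apply: filterS => x /=; rewrite in_setE.
Qed.

End MatrixLimits.

Lemma mx_exprZn (R : comPzRingType) n (c : R) (B : 'M[R]_n) m :
  (c *: B) ^+ m = c ^+ m *: B ^+ m.
Proof.
elim: m => [|m IH]; first by rewrite !expr0 scale1r.
by rewrite !exprS IH -!mulmxE -scalemxAl -scalemxAr scalerA.
Qed.

Section SpectralExponential.
Variables (R : realType) (n : nat) (I : finType).
Variables (A : 'M[R[i]]_n) (c : I -> 'I_n -> 'I_n -> R[i]) (lambda : I -> R).
Hypothesis A_expn : forall m a b,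
  (A ^+ m) a b = \sum_S c S a b * (lambda S)%:C%C ^+ m.
Local Open Scope classical_set_scope.

Lemma is_mexp_spectral (t : R) :
  is_mexp (- ('i%C * t%:C%C) *: A)
    (\matrix_(a, b) \sum_S c S a b * expi (- (t * lambda S))).
Proof.
apply: cvg_mx_entries => a b; rewrite mxE.
have partial_sum N :
    (\sum_(m < N) (m`!%:R)^-1 *: (- ('i%C * t%:C%C) *: A) ^+ m) a b =
    \sum_S c S a b *
        \sum_(m < N) (m`!%:R)^-1 * ('i%C * (- (t * lambda S))%:C%C) ^+ m.
  rewrite summxE; under [RHS]eq_bigr => S _ do rewrite mulr_sumr.
  rewrite [RHS]exchange_big /=; apply: eq_bigr => m _.
  rewrite mx_exprZn !mxE A_expn !mulr_sumr; apply: eq_bigr => S _.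
  have -> : 'i%C * (- (t * lambda S))%:C%C =
             - ('i%C * t%:C%C) * (lambda S)%:C%C.
    by rewrite rmorphN rmorphM mulrN mulNr mulrA.
  by rewrite exprMn !(mulrCA _ (c S a b)).
under eq_fun do rewrite partial_sum.
apply: cvg_big => [|S _]; first exact: add_continuous.
by apply: cvgMl_tmp; exact: cvg_exp_series_imaginary.
Qed.

End SpectralExponential.

Section SubcubeWalk.
Context (R : realType) {k : nat} (D : {set 'I_k}).
Local Notation C := R[i].

Definition flip (j : 'I_k) (x : qvertex k) : qvertex k :=
  [ffun i => if i == j then ~~ x i else x i].

Lemma flipK j : involutive (flip j).
Proof.
by move=> x; apply/ffunP => i; rewrite !ffunE; case: eqP => // _; rewrite negbK.
Qed.

Lemma flip_inj x : injective (flip ^~ x).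
Proof.
move=> j j' /(congr1 (fun y : qvertex k => y j)); rewrite !ffunE eqxx.
by case: eqP => // _; case: (x j).
Qed.

Lemma hypercube_adj_flip j x : hypercube_adj x (flip j x).
Proof.
rewrite /hypercube_adj /hamming.
rewrite (@eq_card _ _ (pred1 j)) ?card1 // => i.
rewrite /= /in_mem /= /in_set asboolb ffunE.
by case: (i == j); case: (x i).
Qed.

Definition subcube_adj : rel (qvertex k) :=
  fun x y => [exists j in D, y == flip j x].

Lemma subcube_adj_sym : symmetric subcube_adj.
Proof.
move=> x y; apply/existsP/existsP => -[j /andP[jD /eqP->]];
  by exists j; rewrite jD flipK eqxx.
Qed.

Lemma spanning_subcube : spanning_subgraph subcube_adj.
Proof.
split; first exact: subcube_adj_sym.
by move=> x y /existsP[j /andP[_ /eqP->]]; exact: hypercube_adj_flip.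
Qed.

Definition walsh (S x : qvertex k) : C := \prod_j (-1) ^+ (x j && S j).

Definition subcube_eigenvalue (S : qvertex k) : R := \sum_(j in D) (-1) ^+ S j.

Lemma walsh_flip S j x : walsh S (flip j x) = (-1) ^+ S j * walsh S x.
Proof.
rewrite /walsh (bigD1 j) //= [in RHS](bigD1 j) //= mulrA; congr (_ * _).
  rewrite ffunE eqxx.
  by case: (x j); case: (S j); rewrite /= ?expr0 ?expr1 ?mulr1 ?mulN1r ?opprK.
by apply: eq_bigr => i /negbTE ij; rewrite ffunE ij.
Qed.

Lemma subcube_adj_natr x z :
  (subcube_adj x z)%:R = \sum_(j in D) (z == flip j x)%:R :> C.
Proof.
have [/existsP[j /andP[jD /eqP->]]|not_adj] := boolP (subcube_adj x z).
  rewrite (bigD1 j) //= eqxx big1 ?addr0 // => i /andP[_ ij].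
  by rewrite (inj_eq (@flip_inj x)) eq_sym (negbTE ij).
rewrite big1 // => j jD; case: eqP => // zE; case/negP: not_adj.
by apply/existsP; exists j; rewrite zE eqxx andbT.
Qed.

Lemma walsh_eigenvector S x :
  \sum_z (subcube_adj x z)%:R * walsh S z =
  (subcube_eigenvalue S)%:C%C * walsh S x.
Proof.
under eq_bigr => z _ do rewrite subcube_adj_natr mulr_suml.
rewrite exchange_big /= rmorph_sum mulr_suml; apply: eq_bigr => j jD.
rewrite (bigD1 (flip j x)) //= eqxx mul1r big1 ?addr0 => [|z /negbTE->].
  by rewrite walsh_flip rmorphXn rmorphN1.
by rewrite mul0r.
Qed.

Lemma walsh_orthogonal x y :
  \sum_S walsh S x * walsh S y = if x == y then (2 ^ k)%:R else 0.
Proof.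
pose sign_pair j b : C := (-1) ^+ (x j && b) * (-1) ^+ (y j && b).
rewrite /walsh; under eq_bigr => S _ do rewrite -big_split /=.
rewrite -(bigA_distr_bigA sign_pair) /=.
under eq_bigr => j _ do rewrite big_bool /sign_pair /= !andbF !andbT mulr1.
case: eqP => [<-|/eqP xy].
  rewrite (eq_bigr (fun=> 2%:R)) ?prodr_const ?card_ord ?natrX // => j _.
  by rewrite -expr2 sqrr_sign.
have [j xyj] : exists j, x j != y j.
  apply/existsP; apply: contraR xy; rewrite negb_exists => /forallP xy.
  by apply/eqP/ffunP => j; apply/eqP; have := xy j; rewrite negbK.
rewrite (bigD1 j) //=; move: xyj.
by case: (x j); case: (y j); rewrite //= ?mulr1 ?mul1r addNr mul0r.
Qed.

Lemma subcube_adj_expn m a b :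
  (adj_matrix R subcube_adj ^+ m) a b =
  \sum_S (2 ^ k)%:R^-1 * walsh S (enum_val a) * walsh S (enum_val b) *
         (subcube_eigenvalue S)%:C%C ^+ m.
Proof.
elim: m a b => [|m IH] a b.
  under eq_bigr => S _ do rewrite expr0 mulr1 -mulrA.
  rewrite -mulr_sumr walsh_orthogonal (inj_eq enum_val_inj) expr0 mxE.
  by case: (a == b); rewrite ?mulr0 // mulVf // pnatr_eq0 expn_eq0.
have sum_vertices (F : qvertex k -> C) :
    \sum_(c < #|qvertex k|) F (enum_val c) = \sum_z F z.
  by rewrite -big_enum_val; apply: eq_bigl.
rewrite exprS mxE; under eq_bigr => c _ do rewrite IH mulr_sumr.
rewrite exchange_big /=; apply: eq_bigr => S _.
have reorder (p x y z q : C) : p * (x * y * z * q) = x * z * q * (p * y).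
  by ring.
under eq_bigr => c _ do rewrite mxE reorder.
rewrite -mulr_sumr.
rewrite (sum_vertices (fun z => (subcube_adj (enum_val a) z)%:R * walsh S z)).
by rewrite walsh_eigenvector exprS; ring.
Qed.

End SubcubeWalk.

Section PerfectStateTransfer.
Variables (R : realType) (k : nat) (u v : qvertex k).
Local Notation D := [set j | u j != v j]%SET.

Lemma walsh_transfer_pihalf :
  `|\sum_S (2 ^ k)%:R^-1 * walsh R S v * walsh R S u *
          expi (- (pi / 2 * subcube_eigenvalue R D S))| = 1.
Proof.
pose F j b : R[i] := (-1) ^+ (v j && b) * (-1) ^+ (u j && b) *
  (if j \in D then expi (- (pi / 2 * (-1) ^+ b)) else 1).
have factor S : (2 ^ k)%:R^-1 * walsh R S v * walsh R S u *
    expi (- (pi / 2 * subcube_eigenvalue R D S)) =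
    (2 ^ k)%:R^-1 * \prod_j F j (S j).
  rewrite /subcube_eigenvalue mulr_sumr -sumrN expi_sum big_mkcond /=.
  rewrite -!mulrA /walsh -!big_split; congr (_ * _).
  by apply: eq_bigr => j _; exact: mulrA.
have norm_factor j : `|\sum_b F j b| = 2.
  have two_i : `|- ('i%C *+ 2)| = 2 :> R[i] by rewrite normrN normrMn norm_i.
  rewrite big_bool /F inE !expi_pihalf_sign; case: (u j); case: (v j) => /=.
  - by rewrite (_ : _ + _ = 2%:R) ?normr_nat //; ring.
  - by rewrite (_ : _ + _ = - ('i%C *+ 2)) //; ring.
  - by rewrite (_ : _ + _ = - ('i%C *+ 2)) //; ring.
  - by rewrite (_ : _ + _ = 2%:R) ?normr_nat //; ring.
under eq_bigr => S _ do rewrite factor.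
rewrite -mulr_sumr -(bigA_distr_bigA F) normrM normr_prod.
rewrite (eq_bigr (fun=> 2%:R)) // prodr_const card_ord -natrX.
by rewrite ger0_norm ?invr_ge0 ?ler0n // mulVf // pnatr_eq0 expn_eq0.
Qed.
End PerfectStateTransfer.

Theorem mainTheorem5 (R : realType) (k : nat) (hk : (1 <= k)%N)
    (u v : qvertex k) :
  exists (H : rel (qvertex k)) (t0 : R) (E : 'M[R[i]]_#|qvertex k|),
    spanning_subgraph H /\ 0 < t0 /\
    is_mexp (- ('i%C * t0%:C%C) *: adj_matrix R H) E /\
    `|amp E u v| = 1.
Proof.
pose D := [set j | u j != v j]%SET.
pose c S (a b : 'I_#|qvertex k|) : R[i] :=
  (2 ^ k)%:R^-1 * walsh R S (enum_val a) * walsh R S (enum_val b).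
exists (subcube_adj D), (pi / 2), (\matrix_(a, b)
  \sum_S c S a b * expi (- (pi / 2 * subcube_eigenvalue R D S))).
split; first exact: spanning_subcube.
split; first by rewrite divr_gt0 ?pi_gt0.
split; first exact: (@is_mexp_spectral R _ _ _ c _ (subcube_adj_expn R D)).
by rewrite /amp mxE /c !enum_rankK; exact: walsh_transfer_pihalf.
Qed.
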